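(* For $A,x\in\mathbb{R}$ define $E_0(A,x):=1$, $E_1(A,x):=e^{(1-x)A}$ and, for $n\ge2$, \[ E_n(A,x):=\begin{cases} \exp\!\Big(\big[x(E_1+E_3+\cdots+E_{n-1})-\tfrac n2\big]A\Big), & n \text{ even},\\[4pt] \exp\!\Big(\big[\tfrac{n+1}{2}-x(E_0+E_2+\cdots+E_{n-1})\big]A\Big), & n\text{ odd},\end{cases} \] with all $E_j$ evaluated at $(A,x)$. Define $\varphi_1(A,x):=x-1$, $\varphi_n(A,x):=\varphi_{n-1}(A,x)-1+xE_{n-1}(A,x)$ for $n\ge2$, and the polynomial $p_n(A):=\frac{\partial\varphi_n}{\partial x}(A,1)$. Then $p_2\mid p_{2n}$ for all $n\ge1$. In particular, since $p_2(A)=2-A$, $A=2$ is a root of $p_{2n}$ for every $n\ge1$. *)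

From HB Require Import structures.
From mathcomp Require Import all_boot all_order all_algebra.
From mathcomp Require Import all_classical all_reals all_analysis.
Set Implicit Arguments. Unset Strict Implicit. Unset Printing Implicit Defensive.
Import Order.TTheory GRing.Theory Num.Theory.
Import numFieldNormedType.Exports.
Local Open Scope ring_scope.

Section E.
Variable R : realType.

(* Given s = [:: E_0; ...; E_(n-1)], the value E_n (n >= 1). *)
Definition Enext (A x : R) (n : nat) (s : seq R) : R :=
  if n == 1%N then expR ((1 - x) * A)
  else if odd n then
    expR ((((n.+1)./2)%:R - x * \sum_(j < n | ~~ odd j) s`_j) * A)
  else
    expR ((x * \sum_(j < n | odd j) s`_j - (n./2)%:R) * A).

Fixpoint Eseq (A x : R) (n : nat) : seq R :=
  match n with
  | 0 => [:: 1]
  | n'.+1 => let s := Eseq A x n' in rcons s (Enext A x n'.+1 s)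
  end.

Definition E (A x : R) (n : nat) : R := (Eseq A x n)`_n.

(* phi_1 = x - 1, phi_n = phi_(n-1) - 1 + x E_(n-1); phi_0 is unused junk (0). *)
Fixpoint phi (A x : R) (n : nat) : R :=
  match n with
  | 0 => 0
  | n'.+1 => if n' is 0 then x - 1 else phi A x n' - 1 + x * E A x n'
  end.

Definition p (n : nat) (A : R) : R := derive1 (fun x => phi A x n) 1.

End E.

From HB Require Import structures.
From mathcomp Require Import all_boot all_order all_algebra.
From mathcomp Require Import all_classical all_reals all_analysis.
From mathcomp Require Import ring.
Set Implicit Arguments. Unset Strict Implicit. Unset Printing Implicit Defensive.
Import Order.TTheory GRing.Theory Num.Theory.
Import numFieldNormedType.Exports.
Local Open Scope ring_scope.

(* Every E_j equals 1 at x = 1, so differentiating the recursion at x = 1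
   shows that e_j := dE_j/dx (A,1) is a polynomial in A given by a linear
   recursion, and p_n = n + e_0 + ... + e_(n-1).  At A = 2 the recursion gives
   p_(2i+2)(2) = - p_(2i)(2), hence p_(2i)(2) = p_0(2) = 0, and p_2 = 2 - A
   divides p_(2i) by the factor theorem. *)

Section RecSeq.
Variables (T : Type) (f : nat -> seq T -> T) (a : T).

Fixpoint recseq (n : nat) : seq T :=
  if n is n'.+1 then rcons (recseq n') (f n (recseq n')) else [:: a].

Definition recnth (x0 : T) (n : nat) : T := nth x0 (recseq n) n.

Lemma size_recseq n : size (recseq n) = n.+1.
Proof. by elim: n => //= n IHn; rewrite size_rcons IHn. Qed.

Lemma nth_recseq x0 n j : (j <= n)%N -> nth x0 (recseq n) j = recnth x0 j.
Proof.
elim: n => [|n IHn]; first by case: j.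
rewrite leq_eqVlt => /predU1P[-> //|lt_jn].
by rewrite /= nth_rcons size_recseq lt_jn IHn.
Qed.

Lemma recnthS x0 n : recnth x0 n.+1 = f n.+1 (recseq n).
Proof. by rewrite /recnth /= nth_rcons size_recseq ltnn eqxx. Qed.

Lemma sum_recseq (V : nmodType) (F : T -> V) x0 n (P : pred 'I_n.+1) :
  \sum_(j < n.+1 | P j) F (nth x0 (recseq n) j) =
  \sum_(j < n.+1 | P j) F (recnth x0 j).
Proof. by apply: eq_bigr => j _; rewrite nth_recseq // -ltnS. Qed.

End RecSeq.

Section Derivatives.
Variable R : realType.

Section Pointwise.
Variables (f g : R -> R) (x df dg : R).
Hypotheses (fdf : is_derive x 1 f df) (gdg : is_derive x 1 g dg).

Lemma is_derive_addf : is_derive x 1 (fun y => f y + g y) (df + dg).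
Proof. exact: is_deriveD. Qed.

Lemma is_derive_addfC (c : R) : is_derive x 1 (fun y => f y + c) df.
Proof. by apply: is_derive_eq (is_deriveD fdf (is_derive_cst c x 1)) _; rewrite addr0. Qed.

Lemma is_derive_subCf (c : R) : is_derive x 1 (fun y => c - f y) (- df).
Proof.
by apply: is_derive_eq (is_deriveD (is_derive_cst c x 1) (is_deriveN fdf)) _; rewrite add0r.
Qed.

Lemma is_derive_idmulf : is_derive x 1 (fun y => y * f y) (x * df + f x).
Proof. by apply: is_derive_eq (is_deriveM (is_derive_id x 1) fdf) _; rewrite [f x *: 1]mulr1. Qed.

Lemma is_derive_expR_mulfr (c : R) :
  is_derive x 1 (fun y => expR (f y * c)) (expR (f x * c) * (df * c)).
Proof.
have fc : is_derive x 1 (fun y => f y * c) (df * c).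
  by apply: is_derive_eq (is_deriveM fdf (is_derive_cst c x 1)) _; rewrite scaler0 add0r mulrC.
exact: (is_derive1_comp (f := expR) (g := fun y => f y * c)).
Qed.

End Pointwise.

Lemma is_derive_sum_cond n (P : pred 'I_n) (h : 'I_n -> R -> R) (dh : 'I_n -> R) (x : R) :
  (forall i, P i -> is_derive x 1 (h i) (dh i)) ->
  is_derive x 1 (fun y => \sum_(i < n | P i) h i y) (\sum_(i < n | P i) dh i).
Proof.
move=> hdh; rewrite big_mkcond.
have -> : (fun y => \sum_(i < n | P i) h i y) =
          \sum_(i < n) (fun y => if P i then h i y else 0).
  by rewrite fct_sumE; apply/funext => y; rewrite big_mkcond.
apply: is_derive_sum => i; case: ifP => [/hdh //|_].
exact: is_derive_cst.
Qed.

End Derivatives.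

Section PhiDerivative.
Variable R : realType.

Lemma sum_odd_ord1 n : \sum_(j < n | odd j) (1 : R) = (n./2)%:R.
Proof.
elim: n => [|n IHn]; first by rewrite big_ord0.
rewrite big_mkcond big_ord_recr -big_mkcond /= IHn uphalf_half.
by case: (odd n); rewrite ?addr0 // natrD addrC.
Qed.

Lemma sum_even_ord1 n : \sum_(j < n | ~~ odd j) (1 : R) = (uphalf n)%:R.
Proof.
elim: n => [|n IHn]; first by rewrite big_ord0.
rewrite big_mkcond big_ord_recr -big_mkcond /= IHn uphalf_half.
by case: (odd n); rewrite /= ?addr0 ?add0n ?natr1.
Qed.

Lemma E_recnth (A x : R) : E A x = recnth (Enext A x) 1 0.
Proof. by apply/funext => n; rewrite /E /recnth; congr nth; elim: n => //= n ->. Qed.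

(* The case n = 1 of the definition, and E_0 = 1, are instances of the odd and
   even cases respectively. *)
Lemma E_rec (A x : R) n : E A x n = expR ((if odd n
    then (uphalf n)%:R - x * \sum_(j < n | ~~ odd j) E A x j
    else x * \sum_(j < n | odd j) E A x j - (n./2)%:R) * A).
Proof.
case: n => [|n]; first by rewrite /= big_ord0 mulr0 subrr mul0r expR0.
rewrite E_recnth recnthS {1}/Enext.
rewrite !(sum_recseq _ _ (fun s : R => s)) -E_recnth.
case: n => [|n]; last by rewrite uphalfE; case: (odd n.+2).
have E0 : E A x 0 = 1 by [].
by rewrite big_mkcond big_ord1 E0 mulr1.
Qed.

Lemma E_at1 (A : R) n : E A 1 n = 1.
Proof.
elim/ltn_ind: n => n IHn.
have sum1 (P : pred nat) : \sum_(j < n | P j) E A 1 j = \sum_(j < n | P j) 1.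
  by apply: eq_bigr => j _; exact: IHn.
rewrite E_rec !mul1r (sum1 odd) (sum1 (fun j => ~~ odd j)) sum_odd_ord1 sum_even_ord1.
by case: ifP; rewrite subrr mul0r expR0.
Qed.

(* [(dE j).[A]] is e_j(A), see is_derive_E_at1, and [pphi n] is p_n, see p_horner. *)
Definition dEnext (n : nat) (s : seq {poly R}) : {poly R} :=
  if odd n then - 'X * ((uphalf n)%:R%:P + \sum_(j < n | ~~ odd j) s`_j)
  else 'X * ((n./2)%:R%:P + \sum_(j < n | odd j) s`_j).

Definition dE : nat -> {poly R} := recnth dEnext 0 0.

Lemma horner_dE (A : R) n : (dE n).[A] = if odd n
  then - A * ((uphalf n)%:R + \sum_(j < n | ~~ odd j) (dE j).[A])
  else A * ((n./2)%:R + \sum_(j < n | odd j) (dE j).[A]).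
Proof.
case: n => [|n]; first by rewrite /dE /recnth /= horner0 big_ord0 addr0 mulr0.
rewrite /dE recnthS {1}/dEnext.
case: ifP => _; rewrite !(hornerM, hornerN, hornerX, hornerD, hornerC, horner_sum);
  by rewrite (sum_recseq _ _ (fun q : {poly R} => q.[A])).
Qed.

Lemma is_derive_E_at1 (A : R) n : is_derive (1 : R) 1 (fun x => E A x n) (dE n).[A].
Proof.
elim/ltn_ind: n => n IHn.
have dsum (P : pred nat) : is_derive (1 : R) 1 (fun x => \sum_(j < n | P j) E A x j)
                                          (\sum_(j < n | P j) (dE j).[A]).
  by apply: is_derive_sum_cond => j _; exact: IHn.
have sum_at1 (P : pred nat) : \sum_(j < n | P j) E A 1 j = \sum_(j < n | P j) 1.
  by apply: eq_bigr => j _; exact: E_at1.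
rewrite horner_dE; case: ifP => n_odd.
- have -> : (fun x => E A x n) = (fun x =>
      expR (((uphalf n)%:R - x * \sum_(j < n | ~~ odd j) E A x j) * A)).
    by apply/funext => x; rewrite E_rec n_odd.
  apply: is_derive_eq (is_derive_expR_mulfr (is_derive_subCf
           (is_derive_idmulf (dsum (fun j => ~~ odd j))) _) A) _.
  rewrite (sum_at1 (fun j => ~~ odd j)) sum_even_ord1 !mul1r subrr mul0r expR0; ring.
- have -> : (fun x => E A x n) = (fun x =>
      expR ((x * \sum_(j < n | odd j) E A x j - (n./2)%:R) * A)).
    by apply/funext => x; rewrite E_rec n_odd.
  apply: is_derive_eq (is_derive_expR_mulfr (is_derive_addfC
           (is_derive_idmulf (dsum odd)) _) A) _.
  rewrite (sum_at1 odd) sum_odd_ord1 !mul1r subrr mul0r expR0; ring.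
Qed.

Lemma phiS (A x : R) n : phi A x n.+1 = phi A x n - 1 + x * E A x n.
Proof. by case: n => [|n] //; rewrite /= mulr1 sub0r addrC. Qed.

Definition pphi (n : nat) : {poly R} := n%:R%:P + \sum_(j < n) dE j.

Lemma is_derive_phi_at1 (A : R) n : is_derive (1 : R) 1 (fun x => phi A x n) (pphi n).[A].
Proof.
elim: n => [|n IHn].
  by rewrite /pphi big_ord0 addr0 hornerC; exact: is_derive_cst.
have -> : (fun x => phi A x n.+1) = (fun x => phi A x n + - 1 + x * E A x n).
  by apply/funext => x; rewrite phiS.
apply: is_derive_eq (is_derive_addf (is_derive_addfC IHn _)
                       (is_derive_idmulf (is_derive_E_at1 A n))) _.
rewrite E_at1 /pphi big_ord_recr /= !(hornerD, hornerC, horner_sum) -natr1 mul1r; ring.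
Qed.

Lemma p_horner (A : R) n : p n A = (pphi n).[A].
Proof. by have dphi := is_derive_phi_at1 A n; rewrite /p derive1E derive_val. Qed.

Lemma horner_pphi2 (A : R) : (pphi 2).[A] = 2 - A.
Proof.
have dE0 : (dE 0).[A] = 0 by rewrite horner_dE /= big_ord0 addr0 mulr0.
have dE1 : (dE 1).[A] = - A by rewrite horner_dE /= big_mkcond big_ord1 /= dE0 addr0 mulr1.
by rewrite /pphi big_ord_recr big_ord1 /= !(hornerD, hornerC) dE1 add0r.
Qed.

Lemma horner_pphi_double_at2 i : (pphi i.*2).[2] = 0.
Proof.
have pphiE n : (pphi n).[2] = n%:R + \sum_(j < n | odd j) (dE j).[2]
                                    + \sum_(j < n | ~~ odd j) (dE j).[2].
  by rewrite /pphi hornerD hornerC horner_sum (bigID (fun j : 'I_n => odd j)) addrA.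
have sum_oddS n : \sum_(j < n.+1 | odd j) (dE j).[2 : R] =
    \sum_(j < n | odd j) (dE j).[2] + (if odd n then (dE n).[2] else 0).
  by rewrite big_mkcond big_ord_recr -big_mkcond.
have sum_evenS n : \sum_(j < n.+1 | ~~ odd j) (dE j).[2 : R] =
    \sum_(j < n | ~~ odd j) (dE j).[2] + (if odd n then 0 else (dE n).[2]).
  by rewrite big_mkcond big_ord_recr -big_mkcond /=; case: (odd n).
have dE_even k : (dE k.*2).[2] = 2 * (k%:R + \sum_(j < k.*2 | odd j) (dE j).[2]).
  by rewrite horner_dE odd_double doubleK.
have dE_odd k : (dE k.*2.+1).[2] =
    - 2 * (k.+1%:R + \sum_(j < k.*2 | ~~ odd j) (dE j).[2] + (dE k.*2).[2]).
  by rewrite horner_dE oddS odd_double uphalfE /= doubleK sum_evenS odd_double addrA.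
suff pphiS k : (pphi k.+1.*2).[2] = - (pphi k.*2).[2].
  by elim: i => [|i IHi]; rewrite ?pphiS ?IHi ?oppr0 // pphiE !big_ord0 !addr0.
rewrite !pphiE doubleS !sum_oddS !sum_evenS oddS odd_double /= dE_odd dE_even.
rewrite -addn2 -!muln2 -natr1 !natrD !natrM; ring.
Qed.

End PhiDerivative.

Theorem lemma4p7 (R : realType) (n : nat) (hn : (0 < n)%N) :
  (exists q : {poly R}, forall A : R, p (2 * n) A = p 2 A * q.[A])
  /\ (forall A : R, p 2 A = 2 - A)
  /\ p (2 * n) (2 : R) = 0.
Proof.
have p2E (A : R) : p 2 A = 2 - A by rewrite p_horner horner_pphi2.
have root2 : root (pphi R (2 * n)) 2 by rewrite mul2n; apply/eqP/horner_pphi_double_at2.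
have [q pphiE] := factor_theorem _ _ root2.
split; [|split] => //.
- exists (- q) => A.
  by rewrite p_horner pphiE p2E !(hornerM, hornerN, hornerD, hornerX, hornerC); ring.
- by rewrite p_horner; exact/eqP.
Qed.
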